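(* Let a system $u_{n+1,x}^j = F^j(x,n,u_{n,x}^j,u_n,u_{n+1})$, $j=1,\dots,N$, be the compatibility condition of the linear systems $$\Phi_{n+1}=U_n\Phi_n,\qquad \Phi_{n,x}=V_n\Phi_n,$$ where $U_n=(a_{ik,n})$ is an $m\times m$ upper triangular matrix and $V_n=(b_{ik,n})$ is an $m\times m$ lower triangular matrix, with entries functions of the dynamical variables. For $k\ge0$ define the lower triangular matrices $R^{(k)}_n$ by $R^{(0)}_n=\mathrm{Id}$ and $R^{(k+1)}_n=D_x(R^{(k)}_n)+R^{(k)}_nV_n$, so that $D_x^k\Phi_n=R^{(k)}_n\Phi_n$, and let $r^{(k)}_{m1,n}$ denote the entry of $R^{(k)}_n$ in the last row and first column. If $D_xa_{11,n}=0$ and $a_{11,n}=a_{mm,n}$, then $I=r^{(k)}_{m1,n}$ is an $n$-integral of the system, i.e. $D_nI=I$ by virtue of the system.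
   Context: The dynamical variables are $u^j_n,u^j_{n\pm1},\dots$ and $u^j_{n,x},u^j_{n,xx},\dots$, treated as independent; $D_n$ is the shift $D_ny(n)=y(n+1)$ and $D_x$ is the total $x$-derivative, with shifted quantities expressed through the system (and its converse form $u^j_{n-1,x}=G^j(x,n,u^j_{n,x},u_n,u_{n-1})$, assumed to exist). Being a compatibility condition means that the relations obtained by differentiating $\Phi_{n+1}=U_n\Phi_n$ in $x$ and shifting $\Phi_{n,x}=V_n\Phi_n$ in $n$ agree by virtue of the system, i.e. $D_xU_n=V_{n+1}U_n-U_nV_n$. A function $I$ of $x,n,u_n,u_{n,x},u_{n,xx},\dots$ is called an $n$-integral if $D_nI=I$ holds by virtue of the system. *)

From HB Require Import structures.
From mathcomp Require Import all_boot all_order all_algebra.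
Set Implicit Arguments. Unset Strict Implicit. Unset Printing Implicit Defensive.
Import Order.TTheory GRing.Theory Num.Theory.
Local Open Scope ring_scope.

(* Abstract differential-difference setting: A is the ring of functions of the
   dynamical variables, taken modulo the system (i.e. equalities hold "by
   virtue of the system"); Dx is the total x-derivative, Dn the shift. *)

Definition is_derivation (A : comUnitRingType) (Dx : A -> A) : Prop :=
  (forall a b, Dx (a + b) = Dx a + Dx b) /\
  (forall a b, Dx (a * b) = Dx a * b + a * Dx b).

Definition is_ring_endo (A : comUnitRingType) (Dn : A -> A) : Prop :=
  (forall a b, Dn (a + b) = Dn a + Dn b) /\
  (forall a b, Dn (a * b) = Dn a * Dn b) /\ Dn 1 = 1.

Definition upper_triangular (A : comUnitRingType) (m : nat) (M : 'M[A]_m) :=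
  forall i j : 'I_m, (j < i)%N -> M i j = 0.

Definition lower_triangular (A : comUnitRingType) (m : nat) (M : 'M[A]_m) :=
  forall i j : 'I_m, (i < j)%N -> M i j = 0.

Fixpoint Rmat (A : comUnitRingType) (m : nat) (Dx : A -> A) (V : 'M[A]_m)
    (k : nat) : 'M[A]_m :=
  match k with
  | 0 => 1%:M
  | k.+1 => map_mx Dx (Rmat Dx V k) + Rmat Dx V k *m V
  end.

From HB Require Import structures.
From mathcomp Require Import all_boot all_order all_algebra.
Import GRing.Theory.
Local Open Scope ring_scope.

(* Put a := U_11 = U_mm.  By the compatibility condition the gauged matrices
   S_k := D_n(R^(k)) U obey the same recurrence S_(k+1) = D_x S_k + S_k V as
   the R^(k).  As U is upper triangular, its last row is a times that of Id,
   so the last rows of S_0 and a R^(0) agree, and since D_x a = 0 the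
   recurrence keeps the last row of S_k equal to a times that of R^(k).
   The first column of U is a e_1, so the (m,1) entry of S_k is
   a D_n(r^(k)_m1); hence a D_n(r^(k)_m1) = a r^(k)_m1, and a is a unit as a
   diagonal entry of the invertible triangular matrix U. *)

Section Derivation.
Context {A : comUnitRingType} {Dx : A -> A}.
Hypothesis Dx_derivation : is_derivation Dx.

Lemma derivation0 : Dx 0 = 0.
Proof. by apply: (addIr (Dx 0)); rewrite -(proj1 Dx_derivation) !add0r. Qed.

HB.instance Definition _ :=
  GRing.isNmodMorphism.Build A A Dx (derivation0, proj1 Dx_derivation).

Lemma map_mx_derivationM p q r (M : 'M[A]_(p, q)) (N : 'M[A]_(q, r)) :
  map_mx Dx (M *m N) = map_mx Dx M *m N + M *m map_mx Dx N.
Proof.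
apply/matrixP => i j; rewrite !mxE raddf_sum -big_split.
by apply: eq_bigr => l _ /=; rewrite (proj2 Dx_derivation) !mxE.
Qed.

Lemma map_mx_derivationZ p q c (M : 'M[A]_(p, q)) :
  Dx c = 0 -> map_mx Dx (c *: M) = c *: map_mx Dx M.
Proof.
by move=> Dc; apply/matrixP => i j; rewrite !mxE (proj2 Dx_derivation) Dc mul0r add0r.
Qed.

Definition Rrecurrent {p n} (V : 'M[A]_n) (S : nat -> 'M[A]_(p, n)) :=
  forall j, S j.+1 = map_mx Dx (S j) + S j *m V.

Lemma Rmat_Rrecurrent {n} (V : 'M[A]_n) : Rrecurrent V (Rmat Dx V).
Proof. by []. Qed.

Lemma Rrecurrent_row {p n} {V : 'M[A]_n} {S : nat -> 'M[A]_(p, n)} (i : 'I_p) :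
  Rrecurrent V S -> Rrecurrent V (fun j => row i (S j)).
Proof. by move=> S_rec j; rewrite S_rec linearD /= -map_row row_mul. Qed.

Lemma Rrecurrent_gauge {p n n'} {W : 'M[A]_n} {V : 'M[A]_n'} {U : 'M[A]_(n, n')}
    {S : nat -> 'M[A]_(p, n)} :
  map_mx Dx U = W *m U - U *m V ->
  Rrecurrent W S -> Rrecurrent V (fun j => S j *m U).
Proof.
move=> gauge S_rec j; rewrite S_rec map_mx_derivationM gauge mulmxBr mulmxDl.
by rewrite !mulmxA addrA subrK.
Qed.

Lemma Rrecurrent_scale {p n} {V : 'M[A]_n} {S T : nat -> 'M[A]_(p, n)} {c} :
  Dx c = 0 -> Rrecurrent V S -> Rrecurrent V T ->
  S 0 = c *: T 0 -> forall j, S j = c *: T j.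
Proof.
move=> Dc S_rec T_rec S0; elim=> [|j IHj] //.
by rewrite S_rec T_rec IHj map_mx_derivationZ // -scalemxAl scalerDr.
Qed.

End Derivation.

Arguments Rrecurrent {A} Dx {p n} V S.

Section Shift.
Context {A : comUnitRingType} {Dx Dn : A -> A}.
Hypothesis Dn_endo : is_ring_endo Dn.
Hypothesis Dn_Dx : forall a, Dn (Dx a) = Dx (Dn a).

Lemma ring_endo0 : Dn 0 = 0.
Proof. by apply: (addIr (Dn 0)); rewrite -(proj1 Dn_endo) !add0r. Qed.

HB.instance Definition _ :=
  GRing.isNmodMorphism.Build A A Dn (ring_endo0, proj1 Dn_endo).
HB.instance Definition _ :=
  GRing.isMonoidMorphism.Build A A Dn (proj2 (proj2 Dn_endo), proj1 (proj2 Dn_endo)).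

Lemma map_mx_ring_endo1 n : map_mx Dn (1%:M : 'M[A]_n) = 1%:M.
Proof. exact: map_mx1. Qed.

Lemma Rrecurrent_shift {p n} {V : 'M[A]_n} {S : nat -> 'M[A]_(p, n)} :
  Rrecurrent Dx V S ->
  Rrecurrent Dx (map_mx Dn V) (fun j => map_mx Dn (S j)).
Proof.
move=> S_rec j; rewrite S_rec map_mxD map_mxM; congr (_ + _).
by apply/matrixP => i l; rewrite !mxE /= Dn_Dx.
Qed.

End Shift.

Section UpperTriangular.
Context {A : comUnitRingType} {n : nat} {U : 'M[A]_n.+1}.
Hypothesis U_upper : upper_triangular U.

Lemma upper_triangular_row_last :
  row ord_max U = U ord_max ord_max *: row ord_max 1%:M.
Proof.
apply/rowP => j; rewrite !mxE; have [<-|ne] := eqVneq ord_max j; first by rewrite mulr1.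
by rewrite mulr0 U_upper // ltn_neqAle leq_ord andbT eq_sym.
Qed.

Lemma mulmx_upper_triangular_col0 p (M : 'M[A]_(p, n.+1)) i :
  (M *m U) i ord0 = M i ord0 * U ord0 ord0.
Proof.
rewrite mxE (bigD1 ord0) //= big1 ?addr0 // => l l_ne0.
by rewrite U_upper ?mulr0 // lt0n.
Qed.

Lemma upper_triangular_unit_diag i :
  U \in unitmx -> U i i \is a GRing.unit.
Proof.
rewrite unitmxE -det_tr det_trig; last first.
  by apply/is_trig_mxP => k l lt_kl; rewrite mxE U_upper.
by move/unitr_prodP/(_ i (mem_index_enum i) isT); rewrite mxE.
Qed.

End UpperTriangular.

(* Matrices are (m+1) x (m+1); last row = ord_max, first column = ord0. *)
Theorem lemma5 (A : comUnitRingType) (Dx Dn : A -> A) (m : nat)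
    (U V : 'M[A]_m.+1) (k : nat) :
  is_derivation Dx ->
  is_ring_endo Dn ->
  (forall a, Dn (Dx a) = Dx (Dn a)) ->
  upper_triangular U -> lower_triangular V ->
  U \in unitmx ->
  (* compatibility condition: D_x U_n = V_{n+1} U_n - U_n V_n *)
  map_mx Dx U = map_mx Dn V *m U - U *m V ->
  Dx (U ord0 ord0) = 0 ->
  U ord0 ord0 = U ord_max ord_max ->
  Dn (Rmat Dx V k ord_max ord0) = Rmat Dx V k ord_max ord0.
Proof.
move=> Dx_der Dn_endo Dn_Dx U_upper _ U_unit compat Da a_diag.
set a := U ord0 ord0.
set S := fun j => map_mx Dn (Rmat Dx V j) *m U.
have S_rec : Rrecurrent Dx V S.
  apply: (Rrecurrent_gauge Dx_der compat).
  exact (Rrecurrent_shift Dn_endo Dn_Dx (Rmat_Rrecurrent V)).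
have last_rows : forall j, row ord_max (S j) = a *: row ord_max (Rmat Dx V j).
  apply: (Rrecurrent_scale Dx_der Da (Rrecurrent_row _ S_rec)).
    exact: Rrecurrent_row _ (Rmat_Rrecurrent V).
  by rewrite /S map_mx_ring_endo1 // mul1mx upper_triangular_row_last // -a_diag.
have := congr1 (fun r : 'rV[A]_m.+1 => r 0 ord0) (last_rows k).
rewrite [in X in X = _]mxE /S mulmx_upper_triangular_col0 // !mxE -/a mulrC.
exact/mulrI/(upper_triangular_unit_diag U_upper ord0 U_unit).
Qed.
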